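(* Let $K\ge 2$, let $L_1,\dots,L_K:\mathbb{R}^d\to\mathbb{R}$ be twice differentiable and convex, and let $\mu>0$, $\rho,\delta\ge 0$. Assume every $L_k$ is $\mu$-smooth and $\rho$-Hessian Lipschitz. Let $\widehat{w}_1,\dots,\widehat{w}_{K-1}\in\mathbb{R}^d$ and let $H_1,\dots,H_{K-1}$ be symmetric positive semidefinite $d\times d$ matrices with $\|H_k\|_2\le\mu$ and $\|H_k-\nabla^2L_k(\widehat{w}_k)\|_2\le\delta$ for all $k\in[K-1]$. Define \[ \widetilde{L}_{K-1}(w)=\sum_{k=1}^{K-1}\Big(L_k(\widehat{w}_k)+(w-\widehat{w}_k)^\top\nabla L_k(\widehat{w}_k)+\tfrac12(w-\widehat{w}_k)^\top H_k(w-\widehat{w}_k)\Big), \] $\widetilde{F}(w)=\frac1K\big(\widetilde{L}_{K-1}(w)+L_K(w)\big)$ and $F(w)=\frac1K\sum_{k=1}^K L_k(w)$. Let $\mathcal{W}\subseteq\mathbb{R}^d$, let $F^*=\min_{w\in\mathcal{W}}F(w)$, $w^*\in\arg\min_{w\in\mathcal{W}}F(w)$, $\widetilde{w}^*\in\arg\min_{w\in\mathcal{W}}\widetilde{F}(w)$ (assumed to exist). Let $w_0=\widehat{w}_{K-1}$, $\widetilde{D}=\|w_0-\widetilde{w}^*\|_2$, and run $T$ iterations of $w_t=w_{t-1}-\eta\nabla\widetilde{F}(w_{t-1})$ with $\eta=1/\mu$, the iterates lying in $\mathcal{W}$. Then \[ F(w_T)-F^*\le\frac{\alpha}{T}+\beta,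 \] where $\alpha=2\mu\widetilde{D}^2$ and \[ \beta=\frac{1}{2K}\sum_{k=1}^{K-1}\Big[\delta\big(\|w^*-\widehat{w}_k\|_2^2+2\widetilde{D}^2+2\|\widetilde{w}^*-\widehat{w}_k\|_2^2\big)+\rho\big(\|w^*-\widehat{w}_k\|_2^3+4\widetilde{D}^3+4\|\widetilde{w}^*-\widehat{w}_k\|_2^3\big)\Big]. \]
   Context: $\|\cdot\|_2$ denotes the Euclidean norm for vectors and the operator norm for matrices; $[N]=\{1,\dots,N\}$. A differentiable $f$ is $\mu$-smooth if $\|\nabla f(w)-\nabla f(w')\|_2\le\mu\|w-w'\|_2$ for all $w,w'$, and $\rho$-Hessian Lipschitz if $\|\nabla^2 f(w)-\nabla^2 f(w')\|_2\le\rho\|w-w'\|_2$ for all $w,w'$. *)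

From HB Require Import structures.
From mathcomp Require Import all_boot all_order all_algebra.
From mathcomp Require Import all_classical all_reals all_analysis.
Set Implicit Arguments. Unset Strict Implicit. Unset Printing Implicit Defensive.
Import Order.TTheory GRing.Theory Num.Theory.
Import numFieldNormedType.Exports.
Local Open Scope classical_set_scope.
Local Open Scope ring_scope.

Section Defs.
Variables (R : realType) (d : nat).

Definition evec (i : 'I_d) : 'cV[R]_d := delta_mx i 0.

Definition enorm (v : 'cV[R]_d) : R := Num.sqrt (\sum_(i < d) v i 0 ^+ 2).

Definition dotp (u v : 'cV[R]_d) : R := (u^T *m v) 0 0.

Definition opnorm (A : 'M[R]_d) : R :=
  sup [set enorm (A *m v) | v in [set v : 'cV[R]_d | enorm v <= 1]].

Definition grad (f : 'cV[R]_d -> R) (w : 'cV[R]_d) : 'cV[R]_d :=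
  \col_(i < d) derive f w (evec i).

Definition hess (f : 'cV[R]_d -> R) (w : 'cV[R]_d) : 'M[R]_d :=
  \matrix_(i < d, j < d) derive (fun x => grad f x i 0) w (evec j).

Definition twice_differentiable (f : 'cV[R]_d -> R) : Prop :=
  (forall w, differentiable f w) /\ (forall w, differentiable (grad f) w).

Definition convex_fun (f : 'cV[R]_d -> R) : Prop :=
  forall (x y : 'cV[R]_d) (t : R), 0 <= t <= 1 ->
    f (t *: x + (1 - t) *: y) <= t * f x + (1 - t) * f y.

Definition smooth_with (mu : R) (f : 'cV[R]_d -> R) : Prop :=
  forall w w', enorm (grad f w - grad f w') <= mu * enorm (w - w').

Definition hessian_lipschitz (rho : R) (f : 'cV[R]_d -> R) : Prop :=
  forall w w', opnorm (hess f w - hess f w') <= rho * enorm (w - w').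

Definition sym_psd (H : 'M[R]_d) : Prop :=
  H^T = H /\ forall v : 'cV[R]_d, 0 <= dotp v (H *m v).

End Defs.

(* The surrogate F~ averages L_K with K - 1 quadratics whose Hessians
   H_k are positive semidefinite of norm at most mu, so F~ is convex with a
   mu-Lipschitz gradient.  Gradient descent with step 1/mu on such a function
   satisfies F~(w_T) - F~(w~* ) <= mu D~^2 / (2T) and never moves away from w~*,
   so ||w_T - w~*|| <= D~.  F and F~ differ only through the second-order Taylor
   errors of L_1, ..., L_{K-1}: since H_k is delta-close to the Hessian at w^_k and
   the Hessian is rho-Lipschitz, the error of the k-th model at distance r from
   w^_k is at most (delta r^2 + rho r^3) / 2.  Bounding this at w* and at w_T
   (where r <= D~ + ||w~* - w^_k||), and using F~(w~* ) <= F~(w* ), gives the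
   claim. *)

From HB Require Import structures.
From mathcomp Require Import all_boot all_order all_algebra.
From mathcomp Require Import all_classical all_reals all_analysis.
From mathcomp Require Import ring lra.

Set Implicit Arguments.
Unset Strict Implicit.
Unset Printing Implicit Defensive.
Import Order.TTheory GRing.Theory Num.Theory.
Import numFieldNormedType.Exports.
Local Open Scope classical_set_scope.
Local Open Scope ring_scope.

Section Euclid.
Context {R : realType} {d : nat}.
Local Notation V := 'cV[R]_d.
Implicit Types (u v w : V) (A : 'M[R]_d).

Lemma dotpE u v : dotp u v = \sum_(i < d) u i 0 * v i 0.
Proof. by rewrite /dotp !mxE; apply: eq_bigr => i _; rewrite mxE. Qed.

Lemma dotpC u v : dotp u v = dotp v u.
Proof. by rewrite !dotpE; apply: eq_bigr => i _; rewrite mulrC. Qed.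

Lemma dotpDl u v w : dotp (u + v) w = dotp u w + dotp v w.
Proof. by rewrite !dotpE -big_split; apply: eq_bigr => i _; rewrite !mxE mulrDl. Qed.

Lemma dotpZl (c : R) u w : dotp (c *: u) w = c * dotp u w.
Proof. by rewrite !dotpE mulr_sumr; apply: eq_bigr => i _; rewrite !mxE mulrA. Qed.

Lemma dotpDr u v w : dotp w (u + v) = dotp w u + dotp w v.
Proof. by rewrite dotpC dotpDl !(dotpC w). Qed.

Lemma dotpZr (c : R) u w : dotp w (c *: u) = c * dotp w u.
Proof. by rewrite dotpC dotpZl dotpC. Qed.

Lemma dotpNl u w : dotp (- u) w = - dotp u w.
Proof. by rewrite -scaleN1r dotpZl mulN1r. Qed.

Lemma dotpNr u w : dotp w (- u) = - dotp w u.
Proof. by rewrite dotpC dotpNl dotpC. Qed.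

Lemma dotpBl u v w : dotp (u - v) w = dotp u w - dotp v w.
Proof. by rewrite dotpDl dotpNl. Qed.

Lemma dotpBr u v w : dotp w (u - v) = dotp w u - dotp w v.
Proof. by rewrite dotpDr dotpNr. Qed.

Lemma dotp0r w : dotp w 0 = 0.
Proof. by rewrite -(scale0r 0) dotpZr mul0r. Qed.

Lemma dotp_sumr (I : Type) (r : seq I) (P : pred I) (f : I -> V) u :
  dotp u (\sum_(i <- r | P i) f i) = \sum_(i <- r | P i) dotp u (f i).
Proof. by elim/big_rec2: _ => [|i y1 y2 _ <-]; rewrite ?dotp0r ?dotpDr. Qed.

Lemma dotp_evecl v i : dotp (evec R i) v = v i 0.
Proof.
rewrite dotpE (bigD1 i) //= big1 => [|j /negbTE ji]; last by rewrite /evec mxE ji mul0r.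
by rewrite /evec mxE !eqxx mul1r addr0.
Qed.

Lemma dotp_mulmx u v A : dotp u (A *m v) = dotp (A^T *m u) v.
Proof. by rewrite /dotp trmx_mul trmxK mulmxA. Qed.

Lemma dotp_ge0 v : 0 <= dotp v v.
Proof. by rewrite dotpE; apply: sumr_ge0 => i _; rewrite -expr2 sqr_ge0. Qed.

Lemma enorm_ge0 v : 0 <= enorm v.
Proof. exact: sqrtr_ge0. Qed.

Lemma enorm_sqr v : enorm v ^+ 2 = dotp v v.
Proof.
rewrite /enorm sqr_sqrtr; last by apply: sumr_ge0 => i _; rewrite sqr_ge0.
by rewrite dotpE; apply: eq_bigr => i _; rewrite expr2.
Qed.

Lemma le_sqr_ge0 (a b : R) : 0 <= b -> a ^+ 2 <= b ^+ 2 -> a <= b.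
Proof.
move=> b0 ab; apply: le_trans (ler_norm a) _.
by rewrite -(ger0_norm b0) -!sqrtr_sqr ler_wsqrtr.
Qed.

Lemma enorm_eq0 v : (enorm v == 0) = (v == 0).
Proof.
apply/eqP/eqP => [v0|->]; last by rewrite /enorm big1 ?sqrtr0 // => i _; rewrite mxE expr0n.
have : \sum_(i < d) v i 0 ^+ 2 = 0.
  by move: (congr1 (fun x => x ^+ 2) v0); rewrite /= enorm_sqr dotpE expr0n.
move=> /eqP; rewrite psumr_eq0 => [/allP v0i|i _]; last exact: sqr_ge0.
apply/matrixP => i j; rewrite (ord1 j) mxE.
by apply/eqP; rewrite -sqrf_eq0; exact: v0i (mem_index_enum _).
Qed.

Lemma enormZ (c : R) v : enorm (c *: v) = `|c| * enorm v.
Proof.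
apply/le_anti/andP; split; apply: le_sqr_ge0; rewrite ?mulr_ge0 ?enorm_ge0 //;
by rewrite exprMn !enorm_sqr dotpZl dotpZr mulrA -expr2 real_normK ?num_real.
Qed.

Lemma enormN v : enorm (- v) = enorm v.
Proof. by rewrite -scaleN1r enormZ normrN1 mul1r. Qed.

Lemma enorm0 : enorm (0 : V) = 0.
Proof. by apply/eqP; rewrite enorm_eq0. Qed.

Lemma dotp_le_enorm u v : dotp u v <= enorm u * enorm v.
Proof.
have [/eqP|u0] := eqVneq (enorm u) 0.
  by rewrite enorm_eq0 => /eqP->; rewrite dotpC dotp0r enorm0 mul0r.
have [/eqP|v0] := eqVneq (enorm v) 0.
  by rewrite enorm_eq0 => /eqP->; rewrite dotp0r enorm0 mulr0.
have uv_gt0 : 0 < enorm u * enorm v by rewrite mulr_gt0 // lt_def ?u0 ?v0 enorm_ge0.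
have := dotp_ge0 (enorm v *: u - enorm u *: v).
rewrite !(dotpBl, dotpBr, dotpZl, dotpZr) -!enorm_sqr (dotpC v u) => h.
have : 0 <= (enorm u * enorm v) * (enorm u * enorm v - dotp u v) by nra.
by rewrite pmulr_rge0 // subr_ge0.
Qed.

Lemma norm_dotp_le u v : `|dotp u v| <= enorm u * enorm v.
Proof.
rewrite ler_norml dotp_le_enorm andbT lerNl -dotpNl -(enormN u).
exact: dotp_le_enorm.
Qed.

Lemma enormD u v : enorm (u + v) <= enorm u + enorm v.
Proof.
apply: le_sqr_ge0; first by rewrite addr_ge0 ?enorm_ge0.
rewrite enorm_sqr dotpDl !dotpDr sqrrD -!enorm_sqr (dotpC v u).
have := dotp_le_enorm u v; lra.
Qed.

Lemma enorm_sum (I : Type) (r : seq I) (P : pred I) (f : I -> V) :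
  enorm (\sum_(i <- r | P i) f i) <= \sum_(i <- r | P i) enorm (f i).
Proof.
elim/big_ind2: _ => [|x1 y1 x2 y2 h1 h2|//]; first by rewrite enorm0.
by apply: le_trans (enormD _ _) _; exact: lerD.
Qed.

Lemma enorm_coord v i : `|v i 0| <= enorm v.
Proof.
apply: le_sqr_ge0; first exact: enorm_ge0.
rewrite real_normK ?num_real // /enorm sqr_sqrtr; last by apply: sumr_ge0 => j _; rewrite sqr_ge0.
by rewrite (bigD1 i) //= lerDl; apply: sumr_ge0 => j _; rewrite sqr_ge0.
Qed.

Lemma opnorm_has_sup A :
  has_sup [set enorm (A *m v) | v in [set v : V | enorm v <= 1]].
Proof.
split; first by exists (enorm (A *m 0)), 0 => //=; rewrite enorm0 ler01.
exists (\sum_(j < d) enorm (A *m evec R j)) => _ [u /= u1 <-].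
rewrite {1}(matrix_sum_delta u) mulmx_sumr.
apply: le_trans (enorm_sum _ _ _) _; apply: ler_sum => j _.
rewrite big_ord1 -scalemxAr enormZ ler_piMl ?enorm_ge0 //.
exact: le_trans (enorm_coord _ _) u1.
Qed.

Lemma enorm_mulmx_le A v : enorm (A *m v) <= opnorm A * enorm v.
Proof.
have [/eqP|v0] := eqVneq (enorm v) 0.
  by rewrite enorm_eq0 => /eqP->; rewrite mulmx0 enorm0 mulr0.
have v_gt0 : 0 < enorm v by rewrite lt_def v0 enorm_ge0.
have : enorm (A *m ((enorm v)^-1 *: v)) <= opnorm A.
  apply: (sup_upper_bound (opnorm_has_sup A)); exists ((enorm v)^-1 *: v) => //=.
  by rewrite enormZ ger0_norm ?invr_ge0 ?enorm_ge0 // mulVf.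
by rewrite -scalemxAr enormZ ger0_norm ?invr_ge0 ?enorm_ge0 // ler_pdivrMl // mulrC.
Qed.

End Euclid.

Section RealIncrements.
Context {R : realType}.

Lemma is_derive_quadratic (a b c s : R) :
  is_derive s 1 (fun t => a + b * t + c * t ^+ 2) (b + 2 * c * s).
Proof.
have -> : (fun t => a + b * t + c * t ^+ 2) = horner (a%:P + b *: 'X + c *: 'X^2).
  by apply: funext => t; rewrite !hornerE.
apply: is_derive_eq; rewrite !(derivD, derivZ, derivC, derivX, derivXn) !hornerE /=.
ring.
Qed.

Lemma ler_increment (g h : R -> R) (a b : R) : a <= b ->
  (forall s, derivable g s 1) -> (forall s, derivable h s 1) ->
  (forall s, a <= s <= b -> 'D_1 g s <= 'D_1 h s) ->
  g b - g a <= h b - h a.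
Proof.
move=> ab dg dh gh.
have dhg s : derivable (h - g) s 1 by apply: derivableB.
suff : (h - g) a <= (h - g) b by rewrite !fctE; lra.
apply: (@ger0_derive1_le_cc R (h - g) a b) => //; rewrite ?in_itv /= ?lexx ?ab //.
- move=> s; rewrite in_itv /= => /andP[aS sB].
  by rewrite derive1E deriveB // subr_ge0 gh // !ltW.
- by apply: derivable_within_continuous => s _.
Qed.

Lemma increment_deviation (g : R -> R) (b c m n t : R) : 0 <= t ->
  (forall s, derivable g s 1) ->
  (forall s, 0 <= s <= t -> `|'D_1 g s - (b + 2 * c * s)| <= m + 2 * n * s) ->
  `|g t - g 0 - (b * t + c * t ^+ 2)| <= m * t + n * t ^+ 2.
Proof.
move=> t0 dg dev.
have quad (p q : R) s : derivable (fun s => 0 + p * s + q * s ^+ 2) s 1.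
  exact: (@ex_derive _ _ _ _ _ _ _ (is_derive_quadratic 0 p q s)).
have Dquad (p q : R) s : 'D_1 (fun s => 0 + p * s + q * s ^+ 2) s = p + 2 * q * s.
  exact: (@derive_val _ _ _ _ _ _ _ (is_derive_quadratic 0 p q s)).
have up : g t - g 0 <= (0 + (b + m) * t + (c + n) * t ^+ 2)
                        - (0 + (b + m) * 0 + (c + n) * 0 ^+ 2).
  apply: (ler_increment t0 dg (quad _ _)) => s /dev.
  by rewrite Dquad ler_norml => /andP[_ h]; lra.
have lo : (0 + (b - m) * t + (c - n) * t ^+ 2) - (0 + (b - m) * 0 + (c - n) * 0 ^+ 2)
          <= g t - g 0.
  apply: (ler_increment t0 (quad _ _) dg) => s /dev.
  by rewrite Dquad ler_norml => /andP[h _]; lra.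
rewrite expr0n /= in up lo; rewrite ler_norml; apply/andP; split; lra.
Qed.

End RealIncrements.

Section Gradients.
Context {R : realType} {d : nat}.
Local Notation V := 'cV[R]_d.
Implicit Types (f : V -> R) (g : V -> V) (x y u : V) (A : 'M[R]_d).

Definition is_gradient f g := forall y u, is_derive y u f (dotp u (g y)).

Definition subgradient_field f g := forall x y, f x + dotp (y - x) (g x) <= f y.

Definition lipschitz_with (c : R) g := forall x y, enorm (g x - g y) <= c * enorm (x - y).

Definition quad_model (c : R) (g0 : V) A (a x : V) : R :=
  c + dotp (x - a) g0 + 2^-1 * dotp (x - a) (A *m (x - a)).

Lemma is_derive_line f y u (t df : R) :
  is_derive t 1 (fun s => f (s *: u + y)) df <-> is_derive (t *: u + y) u f df.
Proof.
have quotE : (fun h : R => h^-1 *: (((fun s => f (s *: u + y)) \o shift t) (h *: 1)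
                                     - f (t *: u + y)))
    = (fun h => h^-1 *: ((f \o shift (t *: u + y)) (h *: u) - f (t *: u + y))).
  by apply: funext => h /=; rewrite /shift /= scalerDl addrA [_%:A]mulr1.
by split=> -[D E]; constructor; move: D E; rewrite /derivable /derive ?quotE.
Qed.

Lemma derivable_gradient_line f g y u (s : R) : is_gradient f g ->
  derivable (fun s : R => f (s *: u + y)) s 1.
Proof. by move=> fg; have /is_derive_line [] := fg (s *: u + y) u. Qed.

Lemma derive_gradient_line f g y u (s : R) : is_gradient f g ->
  'D_1 (fun s : R => f (s *: u + y)) s = dotp u (g (s *: u + y)).
Proof. by move=> fg; have /is_derive_line [] := fg (s *: u + y) u. Qed.

Lemma derive_grad f y u : differentiable f y -> 'D_u f y = dotp u (grad f y).
Proof.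
move=> df; rewrite deriveE // {1}(matrix_sum_delta u) linear_sum dotpE.
apply: eq_bigr => i _; rewrite big_ord1 linearZ /= /grad mxE -deriveE //.
Qed.

Lemma is_gradient_grad f : (forall y, differentiable f y) -> is_gradient f (grad f).
Proof. by move=> df y u; apply: DeriveDef; [exact: diff_derivable | exact: derive_grad]. Qed.

Lemma gradE f g : is_gradient f g -> grad f = g.
Proof.
move=> fg; apply/funext => y; apply/matrixP => i j.
by rewrite (ord1 j) mxE (@derive_val _ _ _ _ _ _ _ (fg y (evec R i))) dotp_evecl.
Qed.

Lemma is_gradientD f1 f2 g1 g2 : is_gradient f1 g1 -> is_gradient f2 g2 ->
  is_gradient (fun x => f1 x + f2 x) (fun x => g1 x + g2 x).
Proof. by move=> fg1 fg2 y u; rewrite dotpDr; exact: is_deriveD. Qed.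

Lemma is_gradientZ (c : R) f g : is_gradient f g ->
  is_gradient (fun x => c * f x) (fun x => c *: g x).
Proof. by move=> fg y u; rewrite dotpZr; exact: is_deriveZ. Qed.

Lemma is_gradient_sum (I : eqType) (r : seq I) (P : pred I) (f : I -> V -> R)
    (g : I -> V -> V) : {in r, forall i, P i -> is_gradient (f i) (g i)} ->
  is_gradient (fun x => \sum_(i <- r | P i) f i x) (fun x => \sum_(i <- r | P i) g i x).
Proof.
move=> fg y u; rewrite -(fct_sumE r P f) dotp_sumr big_seq_cond.
rewrite [X in is_derive _ _ _ X]big_seq_cond.
elim/big_rec2: _ => [|i F D /andP[ir Pi] FD]; first exact: is_derive_cst.
exact: is_deriveD (fg i ir Pi y u) FD.
Qed.

Lemma quad_model_line (c : R) (g0 : V) A (a y u : V) (s : R) : A^T = A ->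
  quad_model c g0 A a (s *: u + y)
  = quad_model c g0 A a y + s * dotp u (g0 + A *m (y - a))
    + s ^+ 2 * (2^-1 * dotp u (A *m u)).
Proof.
move=> A_sym; rewrite /quad_model -(addrA _ y); move: (y - a) => z.
have zAu : dotp z (A *m u) = dotp u (A *m z) by rewrite dotp_mulmx A_sym dotpC.
rewrite mulmxDr -scalemxAr !(dotpDl, dotpDr, dotpZl, dotpZr) zAu.
by field.
Qed.

Lemma is_gradient_quad_model (c : R) (g0 : V) A (a : V) : A^T = A ->
  is_gradient (quad_model c g0 A a) (fun x => g0 + A *m (x - a)).
Proof.
move=> A_sym y u.
have := is_derive_line (quad_model c g0 A a) y u 0 (dotp u (g0 + A *m (y - a))).
rewrite scale0r add0r => <-.
have -> : (fun s => quad_model c g0 A a (s *: u + y)) = (fun s =>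
    quad_model c g0 A a y + dotp u (g0 + A *m (y - a)) * s
    + 2^-1 * dotp u (A *m u) * s ^+ 2).
  by apply: funext => s; rewrite quad_model_line //; ring.
by apply: (is_derive_eq (is_derive_quadratic _ _ _ 0)); rewrite mulr0 addr0.
Qed.

(* The transpose is there because [hess f] is not known to be symmetric. *)
Lemma is_gradient_dotp_grad f v : (forall y, differentiable (grad f) y) ->
  is_gradient (fun x => dotp v (grad f x)) (fun x => (hess f x)^T *m v).
Proof.
move=> dgf.
have coord_grad i : is_gradient (fun x => grad f x i 0) (grad (fun x => grad f x i 0)).
  apply: is_gradient_grad => y.
  exact: differentiable_comp (dgf y) (differentiable_coord (grad f y) i 0).
have := is_gradient_sum (r := index_enum 'I_d) (P := predT)
  (fun i _ _ => is_gradientZ (v i 0) (coord_grad i)).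
have -> : (fun x => \sum_(i <- index_enum 'I_d | predT i) v i 0 * grad f x i 0)
    = (fun x => dotp v (grad f x)) by apply: funext => x; rewrite dotpE.
have -> // : (fun x => \sum_(i <- index_enum 'I_d | predT i)
                         v i 0 *: grad (fun x => grad f x i 0) x)
    = (fun x => (hess f x)^T *m v).
apply: funext => x; apply/matrixP => j k; rewrite (ord1 k) summxE !mxE.
by apply: eq_bigr => i _; rewrite !mxE mulrC.
Qed.

Lemma subgradient_fieldD f1 f2 g1 g2 :
  subgradient_field f1 g1 -> subgradient_field f2 g2 ->
  subgradient_field (fun x => f1 x + f2 x) (fun x => g1 x + g2 x).
Proof. by move=> fg1 fg2 x y; rewrite dotpDr; have := fg1 x y; have := fg2 x y; lra. Qed.

Lemma subgradient_fieldZ (c : R) f g : 0 <= c -> subgradient_field f g ->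
  subgradient_field (fun x => c * f x) (fun x => c *: g x).
Proof. by move=> c0 fg x y; rewrite dotpZr -mulrDr ler_wpM2l. Qed.

Lemma subgradient_field_sum (I : eqType) (r : seq I) (P : pred I) (f : I -> V -> R)
    (g : I -> V -> V) : {in r, forall i, P i -> subgradient_field (f i) (g i)} ->
  subgradient_field (fun x => \sum_(i <- r | P i) f i x)
                    (fun x => \sum_(i <- r | P i) g i x).
Proof.
move=> fg x y; rewrite dotp_sumr -big_split /= big_seq_cond [X in _ <= X]big_seq_cond.
by apply: ler_sum => i /andP[ir Pi]; exact: fg.
Qed.

Lemma subgradient_field_quad_model (c : R) (g0 : V) A (a : V) : sym_psd A ->
  subgradient_field (quad_model c g0 A a) (fun x => g0 + A *m (x - a)).
Proof.
move=> [A_sym A_psd] x y.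
have := quad_model_line c g0 a x (y - x) 1 A_sym.
rewrite scale1r subrK expr1n !mul1r => ->.
by rewrite lerDl mulr_ge0 ?invr_ge0 ?ler0n.
Qed.

Lemma convex_subgradient_field f : convex_fun f -> (forall x, differentiable f x) ->
  subgradient_field f (grad f).
Proof.
move=> cf df x y; rewrite -lerBrDl -derive_grad //.
(* For 0 < h <= 1, convexity bounds the difference quotient at h by [f y - f x]. *)
have dv : derivable f x (y - x) := diff_derivable (df x).
set q := fun h : R => h^-1 *: ((f \o shift x) (h *: (y - x)) - f x).
have q_cvg : q @ 0^'+ --> 'D_(y - x) f x.
  move=> B /dv /nbhs_ballP [_ /posnumP[e] xe_B].
  by exists e%:num => //= z xe_z /gt_eqF/negbT/xe_B; exact.
apply: (cvgr_to_le q_cvg); near=> h.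
have h0 : 0 < h by near: h; exact: nbhs_right_gt.
have h1 : h <= 1 by near: h; apply: nbhs_right_le; exact: ltr01.
rewrite /q /= /shift.
have -> : h *: (y - x) + x = h *: y + (1 - h) *: x.
  by rewrite scalerBr scalerBl scale1r [x - _]addrC addrA.
have : f (h *: y + (1 - h) *: x) <= h * f y + (1 - h) * f x.
  by apply: cf; rewrite (ltW h0) h1.
rewrite ler_pdivrMl //; lra.
Unshelve. all: by end_near.
Qed.

Lemma lipschitz_withD (c1 c2 : R) g1 g2 : lipschitz_with c1 g1 -> lipschitz_with c2 g2 ->
  lipschitz_with (c1 + c2) (fun x => g1 x + g2 x).
Proof.
move=> L1 L2 x y; rewrite opprD addrACA mulrDl.
by apply: le_trans (enormD _ _) _; exact: lerD.
Qed.

Lemma lipschitz_withZ (k c : R) g : 0 <= k -> lipschitz_with c g ->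
  lipschitz_with (k * c) (fun x => k *: g x).
Proof.
by move=> k0 Lg x y; rewrite -scalerBr enormZ ger0_norm // -mulrA ler_wpM2l.
Qed.

Lemma lipschitz_with_sum (I : eqType) (r : seq I) (P : pred I) (c : I -> R)
    (g : I -> V -> V) : {in r, forall i, P i -> lipschitz_with (c i) (g i)} ->
  lipschitz_with (\sum_(i <- r | P i) c i) (fun x => \sum_(i <- r | P i) g i x).
Proof.
move=> Lg x y; rewrite -sumrB mulr_suml.
apply: le_trans (enorm_sum _ _ _) _; rewrite big_seq_cond [X in _ <= X]big_seq_cond.
by apply: ler_sum => i /andP[ir Pi]; exact: Lg.
Qed.

Lemma lipschitz_with_affine (g0 : V) A (a : V) :
  lipschitz_with (opnorm A) (fun x => g0 + A *m (x - a)).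
Proof.
move=> x y; rewrite opprD addrACA subrr add0r -mulmxBr.
by rewrite opprB addrA subrK enorm_mulmx_le.
Qed.

Lemma lipschitz_with_le (c c' : R) g : c <= c' -> lipschitz_with c g ->
  lipschitz_with c' g.
Proof.
move=> cc' Lg x y; apply: le_trans (Lg x y) _.
by rewrite ler_wpM2r ?enorm_ge0.
Qed.

End Gradients.

Section TaylorBounds.
Context {R : realType} {d : nat}.
Local Notation V := 'cV[R]_d.
Implicit Types (f : V -> R) (g : V -> V).

Lemma descent_lemma (mu : R) f g : is_gradient f g -> lipschitz_with mu g ->
  forall x y, f y <= f x + dotp (y - x) (g x) + mu / 2 * enorm (y - x) ^+ 2.
Proof.
move=> fg Lg x y; set v := y - x.
have dev (s : R) : 0 <= s <= 1 ->
    `|'D_1 (fun s : R => f (s *: v + x)) s - (dotp v (g x) + 2 * 0 * s)|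
    <= 0 + 2 * (mu * enorm v ^+ 2 / 2) * s.
  move=> /andP[s0 _]; rewrite (derive_gradient_line _ _ _ fg) mulr0 mul0r addr0 add0r.
  rewrite -dotpBr; apply: le_trans (norm_dotp_le _ _) _.
  apply: le_trans (ler_wpM2l (enorm_ge0 v) (Lg _ _)) _.
  rewrite addrK enormZ ger0_norm //; lra.
have := increment_deviation ler01 (fun _ => derivable_gradient_line fg) dev.
rewrite scale1r scale0r add0r subrK ler_norml => /andP[_]; lra.
Qed.

Lemma hess_quad_deviation (rho delta : R) f (Hm : 'M[R]_d) (a v : V) (s : R) :
  hessian_lipschitz rho f -> 0 <= rho -> opnorm (Hm - hess f a) <= delta ->
  0 <= s <= 1 ->
  `|dotp v (hess f (s *: v + a) *m v) - dotp v (Hm *m v)|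
    <= delta * enorm v ^+ 2 + rho * enorm v ^+ 3.
Proof.
move=> hL rho0 Hd /andP[s0 s1]; have e0 := enorm_ge0 v.
rewrite -dotpBr -mulmxBl; apply: le_trans (norm_dotp_le _ _) _.
have -> : (hess f (s *: v + a) - Hm) *m v
    = (hess f (s *: v + a) - hess f a) *m v - (Hm - hess f a) *m v.
  by rewrite -mulmxBl opprB addrA subrK.
have near : enorm ((hess f (s *: v + a) - hess f a) *m v) <= rho * enorm v * enorm v.
  apply: le_trans (enorm_mulmx_le _ _) (ler_wpM2r e0 _).
  apply: le_trans (hL _ _) _; rewrite addrK enormZ ger0_norm //.
  by rewrite ler_wpM2l // ler_piMl.
have far : enorm ((Hm - hess f a) *m v) <= delta * enorm v.
  exact: le_trans (enorm_mulmx_le _ _) (ler_wpM2r e0 Hd).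
have := enormD ((hess f (s *: v + a) - hess f a) *m v) (- ((Hm - hess f a) *m v)).
rewrite enormN => tri.
apply: le_trans (ler_wpM2l e0 (le_trans tri (lerD near far))) _.
lra.
Qed.

Lemma quad_model_error (rho delta : R) f (Hm : 'M[R]_d) (a x : V) :
  twice_differentiable f -> hessian_lipschitz rho f -> 0 <= rho ->
  opnorm (Hm - hess f a) <= delta ->
  `|f x - quad_model (f a) (grad f a) Hm a x|
    <= 2^-1 * (delta * enorm (x - a) ^+ 2 + rho * enorm (x - a) ^+ 3).
Proof.
move=> [df dgf] hL rho0 Hd; set v := x - a.
set M := delta * _ + rho * _.
have fg := is_gradient_grad df.
have Gg := is_gradient_dotp_grad v dgf.
(* Integrate the Hessian deviation bound twice along the segment from [a] to [x]. *)
have dG (s : R) : 0 <= s <= 1 ->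
    `|dotp v (grad f (s *: v + a)) - dotp v (grad f a) - (dotp v (Hm *m v) * s)|
    <= M * s.
  move=> /andP[s0 s1].
  have := increment_deviation (b := dotp v (Hm *m v)) (c := 0) (m := M) (n := 0) s0
    (fun r => derivable_gradient_line (y := a) (u := v) (s := r) Gg).
  rewrite scale0r add0r !mul0r !mulr0 !addr0; apply => r /andP[r0 rs].
  rewrite (derive_gradient_line _ _ _ Gg) dotp_mulmx trmxK dotpC.
  rewrite mul0r !addr0; apply: hess_quad_deviation => //.
  by rewrite r0 (le_trans rs s1).
have dphi (s : R) : 0 <= s <= 1 ->
    `|'D_1 (fun s : R => f (s *: v + a)) s
      - (dotp v (grad f a) + 2 * (dotp v (Hm *m v) / 2) * s)| <= 0 + 2 * (M / 2) * s.
  move=> /dG; rewrite (derive_gradient_line _ _ _ fg) !ler_norml => /andP[lo up].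
  by apply/andP; split; lra.
have := increment_deviation ler01
  (fun r => derivable_gradient_line (y := a) (u := v) (s := r) fg) dphi.
rewrite scale1r scale0r add0r /v subrK /quad_model !ler_norml => /andP[lo up].
by apply/andP; split; lra.
Qed.

End TaylorBounds.

Section GradientDescent.
Context {R : realType} {d : nat}.
Local Notation V := 'cV[R]_d.
Variables (f : V -> R) (g : V -> V) (mu : R).
Hypotheses (mu_gt0 : 0 < mu) (fg : is_gradient f g) (g_lip : lipschitz_with mu g)
  (f_cvx : subgradient_field f g).

Lemma gradient_step_le x u :
  f (x - mu^-1 *: g x) - f u
    <= mu / 2 * (enorm (x - u) ^+ 2 - enorm (x - mu^-1 *: g x - u) ^+ 2).
Proof.
have := descent_lemma fg g_lip x (x - mu^-1 *: g x).
have := f_cvx x u.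
have -> : x - mu^-1 *: g x - x = - (mu^-1 *: g x) by rewrite addrAC subrr add0r.
have -> : x - mu^-1 *: g x - u = (x - u) - mu^-1 *: g x by rewrite addrAC.
have -> : u - x = - (x - u) by rewrite opprB.
rewrite enormN !enorm_sqr; move: (x - u) => y; set c := mu^-1.
rewrite !(dotpBl, dotpBr, dotpNl, dotpZl, dotpZr) (dotpC y (g x)).
have mu_neq0 : mu != 0 by rewrite gt_eqF.
have sq : mu / 2 * (c * (c * dotp (g x) (g x))) = c * dotp (g x) (g x) / 2.
  by rewrite /c; field.
have lin : mu / 2 * (2 * (c * dotp (g x) y)) = dotp (g x) y.
  by rewrite /c; field.
lra.
Qed.

Lemma gradient_step_decrease x : f (x - mu^-1 *: g x) <= f x.
Proof.
have := descent_lemma fg g_lip x (x - mu^-1 *: g x).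
have -> : x - mu^-1 *: g x - x = - (mu^-1 *: g x) by rewrite addrAC subrr add0r.
rewrite dotpNl dotpZl enormN enorm_sqr dotpZl dotpZr; set G := dotp (g x) (g x).
have G0 : 0 <= G := dotp_ge0 (g x).
have -> : mu / 2 * (mu^-1 * (mu^-1 * G)) = mu^-1 * G / 2.
  by field; rewrite gt_eqF.
have : 0 <= mu^-1 * G by rewrite mulr_ge0 // invr_ge0 ltW.
lra.
Qed.

Variable w : nat -> V.
Hypothesis w_step : forall t, w t.+1 = w t - mu^-1 *: g (w t).

Lemma gd_nonincreasing s t : (s <= t)%N -> f (w t) <= f (w s).
Proof.
move=> /subnKC <-; elim: (t - s)%N => [|n IH]; first by rewrite addn0.
by rewrite addnS w_step; apply: le_trans (gradient_step_decrease _) IH.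
Qed.

Lemma gd_telescope u n :
  \sum_(t < n) (f (w t.+1) - f u)
    <= mu / 2 * (enorm (w 0%N - u) ^+ 2 - enorm (w n - u) ^+ 2).
Proof.
elim: n => [|n IH]; first by rewrite big_ord0 subrr mulr0.
rewrite big_ord_recr /= w_step.
have := gradient_step_le (w n) u; rewrite -w_step; lra.
Qed.

Lemma gd_rate u T : (0 < T)%N ->
  f (w T) - f u <= mu / 2 * enorm (w 0%N - u) ^+ 2 / T%:R.
Proof.
move=> T0; rewrite ler_pdivlMr ?ltr0n // mulrC.
have -> : T%:R * (f (w T) - f u) = \sum_(t < T) (f (w T) - f u).
  by rewrite sumr_const card_ord mulr_natl.
apply: le_trans (le_trans (gd_telescope u T) _).
  by apply: ler_sum => t _; rewrite lerD2r gd_nonincreasing.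
by rewrite ler_wpM2l ?gerBl ?sqr_ge0 // divr_ge0 ?ltW.
Qed.

Lemma gd_fejer u T : (forall t, (0 < t <= T)%N -> f u <= f (w t)) ->
  enorm (w T - u) <= enorm (w 0%N - u).
Proof.
move=> u_min; apply: le_sqr_ge0; first exact: enorm_ge0.
elim: T u_min => [//|T IH] u_min; apply: le_trans (IH _) => [|t /andP[t0 tT]]; last first.
  by apply: u_min; rewrite t0 ltnW.
have := gradient_step_le (w T) u; rewrite -w_step => step.
have := u_min T.+1; rewrite leqnn => /(_ isT) uT.
have : 0 <= mu / 2 * (enorm (w T - u) ^+ 2 - enorm (w T.+1 - u) ^+ 2) by lra.
by rewrite pmulr_rge0 ?divr_gt0 // subr_ge0.
Qed.

End GradientDescent.

Lemma taylor_terms_le (R : realFieldType) (delta rho r a b : R) :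
  0 <= delta -> 0 <= rho -> 0 <= a -> 0 <= b -> 0 <= r <= a + b ->
  delta * r ^+ 2 + rho * r ^+ 3
    <= delta * (2 * a ^+ 2 + 2 * b ^+ 2) + rho * (4 * a ^+ 3 + 4 * b ^+ 3).
Proof.
move=> delta0 rho0 a0 b0 /andP[r0 rab].
have sq : r ^+ 2 <= 2 * a ^+ 2 + 2 * b ^+ 2.
  have r2 : r ^+ 2 <= (a + b) ^+ 2 by rewrite lerXn2r ?nnegrE ?addr_ge0.
  have := sqr_ge0 (a - b); nra.
have cube : r ^+ 3 <= 4 * a ^+ 3 + 4 * b ^+ 3.
  have r3 : r ^+ 3 <= (a + b) ^+ 3 by rewrite lerXn2r ?nnegrE ?addr_ge0.
  have : 0 <= (a + b) * (a - b) ^+ 2 by rewrite mulr_ge0 ?addr_ge0 ?sqr_ge0.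
  nra.
by apply: lerD; apply: ler_wpM2l.
Qed.

Section Surrogate.
Context {R : realType} {d : nat}.
Local Notation V := 'cV[R]_d.
Variables (K : nat) (L : nat -> V -> R) (what : nat -> V) (H : nat -> 'M[R]_d).

Definition avg_loss (x : V) : R := K%:R^-1 * \sum_(1 <= k < K.+1) L k x.

Definition surrogate (x : V) : R :=
  K%:R^-1 * (\sum_(1 <= k < K)
    quad_model (L k (what k)) (grad (L k) (what k)) (H k) (what k) x + L K x).

Definition surrogate_grad (x : V) : V :=
  K%:R^-1 *: (\sum_(1 <= k < K) (grad (L k) (what k) + H k *m (x - what k))
              + grad (L K) x).

Hypotheses (K_gt0 : (0 < K)%N) (LK_diff : forall x, differentiable (L K) x).
Hypothesis H_psd : forall k, (1 <= k < K)%N -> sym_psd (H k).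

Lemma is_gradient_surrogate : is_gradient surrogate surrogate_grad.
Proof.
apply: is_gradientZ; apply: is_gradientD; last exact: is_gradient_grad.
apply: is_gradient_sum => k; rewrite mem_index_iota => /H_psd [H_sym _] _.
exact: is_gradient_quad_model.
Qed.

Lemma surrogate_subgradient_field : convex_fun (L K) ->
  subgradient_field surrogate surrogate_grad.
Proof.
move=> LK_cvx; apply: subgradient_fieldZ; first by rewrite invr_ge0.
apply: subgradient_fieldD; last exact: convex_subgradient_field.
apply: subgradient_field_sum => k; rewrite mem_index_iota => /H_psd H_k _.
exact: subgradient_field_quad_model.
Qed.

Lemma surrogate_grad_lipschitz (mu : R) : smooth_with mu (L K) ->
  (forall k, (1 <= k < K)%N -> opnorm (H k) <= mu) ->
  lipschitz_with mu surrogate_grad.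
Proof.
move=> LK_smooth H_le.
apply: (@lipschitz_with_le _ _ (K%:R^-1 * (\sum_(1 <= k < K) opnorm (H k) + mu))).
  have : \sum_(1 <= k < K) opnorm (H k) <= \sum_(1 <= k < K) mu by exact: ler_sum_nat.
  rewrite sumr_const_nat -[mu *+ _]mulr_natr natrB // ler_pdivrMl ?ltr0n //; lra.
apply: lipschitz_withZ; first by rewrite invr_ge0.
apply: lipschitz_withD => //; apply: lipschitz_with_sum => k _ _.
exact: lipschitz_with_affine.
Qed.

Variables (rho delta : R).
Hypotheses (rho_ge0 : 0 <= rho) (delta_ge0 : 0 <= delta).
Hypothesis L_twice : forall k, (1 <= k < K)%N -> twice_differentiable (L k).
Hypothesis L_hess_lip : forall k, (1 <= k < K)%N -> hessian_lipschitz rho (L k).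
Hypothesis H_close : forall k, (1 <= k < K)%N -> opnorm (H k - hess (L k) (what k)) <= delta.

Lemma avg_loss_surrogate_gap x :
  `|avg_loss x - surrogate x| <= (2 * K%:R)^-1 *
    \sum_(1 <= k < K) (delta * enorm (x - what k) ^+ 2 + rho * enorm (x - what k) ^+ 3).
Proof.
have -> : avg_loss x - surrogate x = K%:R^-1 * \sum_(1 <= k < K)
    (L k x - quad_model (L k (what k)) (grad (L k) (what k)) (H k) (what k) x).
  by rewrite /avg_loss /surrogate big_nat_recr //= sumrB; ring.
rewrite normrM ger0_norm ?invr_ge0 // invfM -mulrA mulrCA ler_wpM2l ?invr_ge0 //.
apply: le_trans (ler_norm_sum _ _ _) _; rewrite mulr_sumr.
apply: ler_sum_nat => k k_range.
exact: quad_model_error (L_twice k_range) (L_hess_lip k_range) rho_ge0 (H_close k_range).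
Qed.

Lemma avg_loss_excess_le x xt xs (D : R) :
  enorm (x - xt) <= D -> surrogate xt <= surrogate xs ->
  avg_loss x - avg_loss xs <= surrogate x - surrogate xt + (2 * K%:R)^-1 *
    \sum_(1 <= k < K) (delta * (enorm (xs - what k) ^+ 2 + 2 * D ^+ 2
                                 + 2 * enorm (xt - what k) ^+ 2)
                      + rho * (enorm (xs - what k) ^+ 3 + 4 * D ^+ 3
                               + 4 * enorm (xt - what k) ^+ 3)).
Proof.
move=> x_near xt_opt; have D_ge0 := le_trans (enorm_ge0 _) x_near.
set S := \sum_(1 <= k < K) (delta * (2 * D ^+ 2 + 2 * enorm (xt - what k) ^+ 2)
                          + rho * (4 * D ^+ 3 + 4 * enorm (xt - what k) ^+ 3)).
have gap_x : \sum_(1 <= k < K) (delta * enorm (x - what k) ^+ 2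
                                 + rho * enorm (x - what k) ^+ 3) <= S.
  apply: ler_sum_nat => k _; apply: taylor_terms_le; rewrite ?enorm_ge0 //=.
  have -> : x - what k = (x - xt) + (xt - what k) by rewrite addrA subrK.
  exact: le_trans (enormD _ _) (lerD x_near (lexx _)).
have -> : \sum_(1 <= k < K) (delta * (enorm (xs - what k) ^+ 2 + 2 * D ^+ 2
      + 2 * enorm (xt - what k) ^+ 2) + rho * (enorm (xs - what k) ^+ 3
      + 4 * D ^+ 3 + 4 * enorm (xt - what k) ^+ 3))
    = \sum_(1 <= k < K) (delta * enorm (xs - what k) ^+ 2
                        + rho * enorm (xs - what k) ^+ 3) + S.
  by rewrite -big_split; apply: eq_bigr => k _ /=; ring.
have := avg_loss_surrogate_gap x; have := avg_loss_surrogate_gap xs.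
rewrite !ler_norml => /andP[gap_xs _] /andP[_ gap_x'].
have cK : 0 <= (2 * K%:R)^-1 :> R by rewrite invr_ge0 mulr_ge0 ?ler0n.
have := ler_wpM2l cK gap_x; lra.
Qed.

End Surrogate.

Theorem theorem3 (R : realType) (d K : nat) (L : nat -> 'cV[R]_d -> R)
  (mu rho delta : R) (what : nat -> 'cV[R]_d) (H : nat -> 'M[R]_d)
  (W : set 'cV[R]_d) (wstar wtstar : 'cV[R]_d) (T : nat) (w : nat -> 'cV[R]_d) :
  (2 <= K)%N ->
  (forall k, (1 <= k <= K)%N -> twice_differentiable (L k)) ->
  (forall k, (1 <= k <= K)%N -> convex_fun (L k)) ->
  0 < mu -> 0 <= rho -> 0 <= delta ->
  (forall k, (1 <= k <= K)%N -> smooth_with mu (L k)) ->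
  (forall k, (1 <= k <= K)%N -> hessian_lipschitz rho (L k)) ->
  (forall k, (1 <= k < K)%N -> sym_psd (H k)) ->
  (forall k, (1 <= k < K)%N -> opnorm (H k) <= mu) ->
  (forall k, (1 <= k < K)%N -> opnorm (H k - hess (L k) (what k)) <= delta) ->
  let Ltilde := fun x : 'cV[R]_d => \sum_(1 <= k < K)
      (L k (what k) + dotp (x - what k) (grad (L k) (what k))
       + 2^-1 * dotp (x - what k) (H k *m (x - what k))) in
  let Ftilde := fun x : 'cV[R]_d => K%:R^-1 * (Ltilde x + L K x) in
  let F := fun x : 'cV[R]_d => K%:R^-1 * \sum_(1 <= k < K.+1) L k x in
  wstar \in W -> (forall x, x \in W -> F wstar <= F x) ->
  wtstar \in W -> (forall x, x \in W -> Ftilde wtstar <= Ftilde x) ->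
  w 0%N = what K.-1 ->
  (forall t, w t.+1 = w t - mu^-1 *: grad Ftilde (w t)) ->
  (forall t, (t <= T)%N -> w t \in W) ->
  (0 < T)%N ->
  let Dt := enorm (w 0%N - wtstar) in
  let alpha := 2 * mu * Dt ^+ 2 in
  let beta := (2 * K%:R)^-1 * \sum_(1 <= k < K)
      (delta * (enorm (wstar - what k) ^+ 2 + 2 * Dt ^+ 2
                + 2 * enorm (wtstar - what k) ^+ 2)
       + rho * (enorm (wstar - what k) ^+ 3 + 4 * Dt ^+ 3
                + 4 * enorm (wtstar - what k) ^+ 3)) in
  F (w T) - F wstar <= alpha / T%:R + beta.
Proof.
move=> K2 L_twice L_cvx mu_gt0 rho_ge0 delta_ge0 L_smooth L_hess_lip H_psd H_le H_close
  Ltilde Ftilde F ws_W _ _ wt_min _ w_step w_W T_gt0.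
(* The optimality of [wstar], [wtstar \in W] and the value of [w 0] are not needed. *)
rewrite [X in is_true X]/=; set Dt := enorm (w 0%N - wtstar).
have K_gt0 : (0 < K)%N := ltnW K2.
have K_K : (1 <= K <= K)%N by rewrite K_gt0 leqnn.
have lower k : (1 <= k < K)%N -> (1 <= k <= K)%N by case/andP => -> /ltnW.
rewrite -[Ftilde]/(surrogate K L what H) in w_step wt_min.
have Fg := is_gradient_surrogate what (L_twice K K_K).1 H_psd.
have Fcvx := surrogate_subgradient_field what (L_twice K K_K).1 H_psd (L_cvx K K_K).
have Flip := surrogate_grad_lipschitz what K_gt0 (L_smooth K K_K) H_le.
have w_step' t : w t.+1 = w t - mu^-1 *: surrogate_grad K L what H (w t).
  by rewrite w_step (gradE Fg).
have rate := gd_rate mu_gt0 Fg Flip Fcvx w_step' wtstar T_gt0; rewrite -/Dt in rate.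
have fejer : enorm (w T - wtstar) <= Dt.
  by apply: (gd_fejer mu_gt0 Fg Flip Fcvx w_step') => t /andP[_ /w_W/wt_min].
have := avg_loss_excess_le K_gt0 rho_ge0 delta_ge0
  (fun k k_range => L_twice k (lower k k_range))
  (fun k k_range => L_hess_lip k (lower k k_range)) H_close fejer (wt_min wstar ws_W).
have : 0 <= mu * Dt ^+ 2 / T%:R by rewrite divr_ge0 ?ler0n // mulr_ge0 ?sqr_ge0 // ltW.
rewrite -[F]/(avg_loss K L); lra.
Qed.
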